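(* Let $D\ge 2$, let $\eta=\mathrm{diag}(-1,1,\dots,1)$ be the $D\times D$ Minkowski matrix, and let $M$ be an arbitrary invertible real $D\times D$ matrix. Then $M$ can be written as $M=\lambda s$ with $\lambda$ a real Lorentz matrix (i.e. $\lambda^t\eta\lambda=\eta$) and $s$ a real symmetric matrix if and only if (i) the real matrix $\eta M^t\eta M$ has a real square root, and (ii) at least one such real square root can be written as the product $\eta\, s'$ of $\eta$ with a real symmetric matrix $s'$.
   Context: $m^t$ denotes the transpose of the matrix $m$. A square root of a matrix $A$ is a matrix $\gamma$ with $\gamma^2=A$. *)

From mathcomp Require Import all_boot all_order all_algebra.
From mathcomp Require Import reals.
Set Implicit Arguments. Unset Strict Implicit. Unset Printing Implicit Defensive.
Import GRing.Theory Num.Theory.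
Local Open Scope ring_scope.

Definition minkowski (R : realType) (D : nat) : 'M[R]_D :=
  diag_mx (\row_(i < D) (if (i : nat) == 0%N then -1 else 1)).

Definition lorentz (R : realType) (D : nat) (lam : 'M[R]_D) : Prop :=
  lam^T *m minkowski R D *m lam = minkowski R D.

Definition symmetric_mx (R : realType) (D : nat) (s : 'M[R]_D) : Prop :=
  s^T = s.

Definition is_sqrt_mx (R : realType) (D : nat) (A gamma : 'M[R]_D) : Prop :=
  gamma *m gamma = A.

From mathcomp Require Import all_boot all_order all_algebra.
From mathcomp Require Import reals.
Set Implicit Arguments. Unset Strict Implicit.
Local Open Scope ring_scope.
Import GRing.Theory Num.Theory.

(* Writing [M = lam s] means [M^T eta M = s eta s] with [lam] Lorentz; since eta
   is an involution this says exactly that [eta s] is a square root of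
   [eta M^T eta M].  Conversely, from such a root [eta s] the matrix [s] is
   invertible (taking determinants) and [lam := M s^-1] is Lorentz. *)

Section Congruence.

Variables (R : comUnitRingType) (n : nat) (e : 'M[R]_n).

Lemma congr_form_mul (lam s : 'M[R]_n) :
  lam^T *m e *m lam = e -> (lam *m s)^T *m e *m (lam *m s) = s^T *m e *m s.
Proof.
move=> he; rewrite trmx_mul -!mulmxA (mulmxA lam^T) (mulmxA (lam^T *m e)) he.
by rewrite !mulmxA.
Qed.

Lemma unitmx_congr_form (M s : 'M[R]_n) :
  e \in unitmx -> M \in unitmx -> s^T *m e *m s = M^T *m e *m M ->
  s \in unitmx.
Proof.
move=> ue uM hs; have : M^T *m e *m M \in unitmx.
  by rewrite !unitmx_mul unitmx_tr uM ue.
by rewrite -hs !unitmx_mul => /andP[_ ->].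
Qed.

Lemma congr_form_mul_invmx (M s : 'M[R]_n) :
  s \in unitmx -> s^T *m e *m s = M^T *m e *m M ->
  (M *m invmx s)^T *m e *m (M *m invmx s) = e.
Proof.
move=> us hs; rewrite trmx_mul trmx_inv.
rewrite -!mulmxA (mulmxA M^T) (mulmxA (M^T *m e)) -hs !mulmxA.
have usT : s^T \in unitmx by rewrite unitmx_tr.
by rewrite mulVmx // mul1mx -mulmxA mulmxV // mulmx1.
Qed.

End Congruence.

Section Minkowski.

Variables (R : realType) (D : nat).
Local Notation eta := (minkowski R D).

Lemma minkowskiK : eta *m eta = 1%:M.
Proof.
apply/matrixP => i j; rewrite /minkowski mul_diag_mx !mxE.
case: (i == j); rewrite ?mulr0n ?mulr1n ?mulr0 //.
by case: ifP => _; rewrite ?mulN1r ?opprK ?mul1r.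
Qed.

Lemma unitmx_minkowski : eta \in unitmx.
Proof. by apply: (intro_unitmx (B := eta)); rewrite minkowskiK. Qed.

Lemma is_sqrt_mx_minkowski (M s : 'M[R]_D) : symmetric_mx s ->
  is_sqrt_mx (eta *m M^T *m eta *m M) (eta *m s) <->
  s^T *m eta *m s = M^T *m eta *m M.
Proof.
rewrite /symmetric_mx /is_sqrt_mx => ->; split=> h; last first.
  have -> : eta *m M^T *m eta *m M = eta *m (M^T *m eta *m M).
    by rewrite !mulmxA.
  by rewrite -h !mulmxA.
have := congr1 (mulmx eta) h.
by rewrite !mulmxA minkowskiK !mul1mx -!mulmxA.
Qed.

End Minkowski.

Theorem proposition1 (R : realType) (D : nat) (hD : (2 <= D)%N)
    (M : 'M[R]_D) (hM : M \in unitmx) :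
  (exists lam s : 'M[R]_D, lorentz lam /\ symmetric_mx s /\ M = lam *m s)
  <->
  (exists gamma : 'M[R]_D,
      is_sqrt_mx (minkowski R D *m M^T *m minkowski R D *m M) gamma /\
      exists s' : 'M[R]_D, symmetric_mx s' /\ gamma = minkowski R D *m s').
Proof.
split.
  move=> [lam [s [hlam [hs ->]]]].
  exists (minkowski R D *m s); split; last by exists s.
  by apply/is_sqrt_mx_minkowski => //; rewrite congr_form_mul.
move=> [g [hg [s [hs hgs]]]]; subst g.
have hform := (is_sqrt_mx_minkowski M hs).1 hg.
have us := unitmx_congr_form (unitmx_minkowski R D) hM hform.
exists (M *m invmx s), s; split; first exact: congr_form_mul_invmx.
by rewrite -mulmxA mulVmx // mulmx1.
Qed.
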